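(* Let $X$ be a compact metric space, $f\colon X\to X$ continuous, and $n\in\mathbb N$. Then $$\mathrm{Per}(f^{(n)})=\{[m_1,\dots,m_n]: m_i\in\mathrm{Per}(f)\ \text{for all}\ 1\le i\le n\},$$ $$\mathrm{Per}(f_n)=\bigcup_{l=1}^{n}\Big\{[d_1,\dots,d_l]: d_i\mid m_i\in\mathrm{Per}(f)\ \text{for all}\ 1\le i\le l,\ \text{and}\ \tfrac{m_1}{d_1}+\dots+\tfrac{m_l}{d_l}\le n\Big\},$$ $$\mathrm{Per}(f^{<\omega})=\bigcup_{l=1}^{\infty}\{[d_1,\dots,d_l]: d_i\mid m_i\in\mathrm{Per}(f)\ \text{for all}\ 1\le i\le l\},$$ where $[k_1,\dots,k_l]$ denotes the least common multiple of $k_1,\dots,k_l$.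
   Context: For a map $g$, $\mathrm{Per}(g)$ is the set of fundamental (least) periods of periodic points of $g$. $X^{(n)}$ is the $n$-fold Cartesian product $X\times\dots\times X$ and $f^{(n)}(x_1,\dots,x_n)=(f(x_1),\dots,f(x_n))$. $F_n(X)$ is the set of nonempty subsets of $X$ with at most $n$ points and $F(X)=\bigcup_{n\ge1}F_n(X)$ is the set of nonempty finite subsets of $X$; $f_n$ and $f^{<\omega}$ are the restrictions of the induced map $C\mapsto f(C)$ to $F_n(X)$ and $F(X)$ respectively. *)

From HB Require Import structures.
From mathcomp Require Import all_boot all_order all_algebra.
From mathcomp Require Import all_classical all_reals all_analysis.
Set Implicit Arguments. Unset Strict Implicit. Unset Printing Implicit Defensive.
Local Open Scope classical_set_scope.

Definition PerOn {T : Type} (S : set T) (g : T -> T) : set nat :=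
  [set p | exists x, S x /\ (0 < p)%N /\ iter p g x = x /\
           (forall k, (0 < k)%N -> (k < p)%N -> iter k g x <> x)].

Definition Per {T : Type} (g : T -> T) : set nat := PerOn setT g.

Definition prod_map {X : Type} (n : nat) (f : X -> X) : ('I_n -> X) -> ('I_n -> X) :=
  fun x i => f (x i).

Definition induced_map {X : Type} (f : X -> X) : set X -> set X := fun C => f @` C.

Definition Fn {X : eqType} (n : nat) : set (set X) :=
  [set A | A !=set0 /\ exists s : seq X, (size s <= n)%N /\ A = [set x | x \in s]].

Definition Ffin {X : eqType} : set (set X) :=
  [set A | A !=set0 /\ exists s : seq X, A = [set x | x \in s]].

Definition lcm_fam (l : nat) (k : 'I_l -> nat) : nat := \big[lcmn/1%N]_(i < l) k i.

From HB Require Import structures.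
From mathcomp Require Import all_boot all_order all_algebra.
From mathcomp Require Import all_classical all_reals all_analysis.
Local Open Scope classical_set_scope.

(* A periodic point of [f^(n)] is a tuple of [f]-periodic points, with the lcm of their
   periods as its period.  If a finite set [A] satisfies [f^p(A) = A], then [f^p] permutes
   [A], so every point of [A] is [f]-periodic; for [y] in [A] of period [m], Bezout gives
   [f^(gcd p m)(y)] in [A].  Hence [A] contains the orbit of [y] under [f^d], [d = gcd p m],
   which has [m/d] points, and [p] is the lcm of these [d]; choosing one point per period
   yields [sum m_i/d_i <= |A|].  Conversely, for [d_i | m_i], take a point [x_i] of period
   [m_i] (the same point for equal periods) and the union of the orbits of [x_i] under
   [f^(L_i)], where [L_i] is the lcm of the [d_j] with [m_j = m_i]: it has at most
   [sum m_i/d_i] points and least period [lcm d_i]. *)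

Set Implicit Arguments.
Unset Strict Implicit.
Unset Printing Implicit Defensive.

Section LeastPeriod.
Variables (T : Type) (g : T -> T).
Implicit Types (x : T) (p k : nat).

Definition least_period x p : Prop :=
  (0 < p)%N /\ iter p g x = x /\ (forall k, (0 < k)%N -> (k < p)%N -> iter k g x <> x).

Lemma PerP p : Per g p <-> exists x, least_period x p.
Proof. by split=> [[x [_ xp]]|[x xp]]; exists x. Qed.

Lemma Per_gt0 p : Per g p -> (0 < p)%N.
Proof. by case=> x [_ []]. Qed.

Lemma iter_mul_fixed x p c : iter p g x = x -> iter (c * p) g x = x.
Proof. by move=> gpx; rewrite iterM; elim: c => //= c ->. Qed.

Lemma iter_modn x p k : iter p g x = x -> iter k g x = iter (k %% p) g x.
Proof. by move=> gpx; rewrite {1}(divn_eq k p) addnC iterD iter_mul_fixed. Qed.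

Lemma least_period_fixedP x p :
  least_period x p -> forall k, iter k g x = x <-> (p %| k)%N.
Proof.
move=> [p_gt0 [gpx p_min]] k; split=> [gkx|/dvdnP [c ->]]; last exact: iter_mul_fixed.
apply/negPn/negP => p_ndvd; apply: (p_min (k %% p)); rewrite ?ltn_pmod //.
  by rewrite lt0n.
by rewrite -iter_modn.
Qed.

Lemma least_periodP x p :
  (0 < p)%N -> (forall k, iter k g x = x <-> (p %| k)%N) -> least_period x p.
Proof.
move=> p_gt0 fixedP; split=> //; split; first exact/fixedP.
by move=> k k_gt0 k_lt /fixedP /(dvdn_leq k_gt0); rewrite leqNgt k_lt.
Qed.

Lemma least_period_uniq x p q : least_period x p -> least_period x q -> p = q.
Proof.
move=> /least_period_fixedP xp /least_period_fixedP xq.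
by apply/eqP; rewrite eqn_dvd; apply/andP; split; [apply/xp/xq | apply/xq/xp].
Qed.

Lemma iter_periodic_cancel x p a k : (0 < p)%N -> iter p g x = x ->
  iter k g (iter a g x) = iter a g x -> iter k g x = x.
Proof.
move=> p_gt0 gpx gk.
have back : iter (a * p - a) g (iter a g x) = x.
  by rewrite -iterD subnK ?leq_pmulr ?iter_mul_fixed.
by rewrite -{1}back -iterD addnC iterD gk back.
Qed.

Lemma least_period_iter x p a : least_period x p -> least_period (iter a g x) p.
Proof.
move=> xp; have [p_gt0 [gpx _]] := xp.
apply: least_periodP => // k; split=> [/(iter_periodic_cancel p_gt0 gpx)|].
  exact: (iffLR (least_period_fixedP xp k)).
by move=> /(least_period_fixedP xp) gkx; rewrite -iterD addnC iterD gkx.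
Qed.

Lemma least_period_eqmod x p a b :
  least_period x p -> iter a g x = iter b g x <-> a = b %[mod p].
Proof.
wlog ab : a b / (a <= b)%N.
  move=> W xp; case: (leqP a b) => [|/ltnW] ba; first exact: W.
  by split=> /esym; move/(W _ _ ba xp) => ->.
move=> xp; have -> : iter a g x = iter b g x <-> iter (b - a) g (iter a g x) = iter a g x.
  by rewrite -iterD subnK //; split=> ->.
rewrite (least_period_fixedP (least_period_iter a xp)) -eqn_mod_dvd // eq_sym.
by split=> /eqP.
Qed.

Lemma least_period_exists x p : (0 < p)%N -> iter p g x = x -> exists q, least_period x q.
Proof.
move=> p_gt0 gpx.
have ex_p : exists q, (0 < q)%N && `[< iter q g x = x >] by exists p; rewrite p_gt0 asboolT.
case: (ex_minnP ex_p) => q /andP [q_gt0 /asboolP gqx] q_min; exists q; split=> //; split=> //.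
by move=> k k_gt0 k_lt gkx; move: (q_min k); rewrite k_gt0 asboolT // leqNgt k_lt => /(_ isT).
Qed.

Lemma least_period_iter_iter x p k : least_period x p -> iter p (iter k g) x = x.
Proof. by move=> xp; rewrite -iterM; apply/(least_period_fixedP xp)/dvdn_mulr. Qed.

End LeastPeriod.

Lemma dvdn_lcm_famP l (m : 'I_l -> nat) k : (lcm_fam m %| k)%N <-> forall i, (m i %| k)%N.
Proof. by split=> [/dvdn_biglcmP mk i|mk]; [exact: mk | apply/dvdn_biglcmP => i _]. Qed.

Lemma lcm_fam_gt0 l (m : 'I_l -> nat) : (forall i, 0 < m i)%N -> (0 < lcm_fam m)%N.
Proof.
move=> m_gt0; rewrite /lcm_fam.
by elim/big_ind: _ => // a b a_gt0 b_gt0; rewrite lcmn_gt0 a_gt0.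
Qed.

Lemma leq_sum_divn l (d m : 'I_l -> nat) :
  (forall i, 0 < m i)%N -> (forall i, d i %| m i)%N -> (l <= \sum_(i < l) (m i %/ d i))%N.
Proof.
move=> m_gt0 dvdn_dm; rewrite -[X in (X <= _)%N]card_ord -sum1_card; apply: leq_sum => i _.
have d_gt0 := dvdn_gt0 (m_gt0 i) (dvdn_dm i).
by rewrite divn_gt0 // dvdn_leq.
Qed.

Section ProductMap.
Variables (X : Type) (n : nat) (f : X -> X).

Lemma iter_prod_map k (x : 'I_n -> X) : iter k (prod_map f) x = fun i => iter k f (x i).
Proof. by elim: k => //= k ->. Qed.

Lemma iter_prod_map_fixed k (x : 'I_n -> X) :
  iter k (prod_map f) x = x <-> forall i, iter k f (x i) = x i.
Proof.
by rewrite iter_prod_map; split=> [fixed i | fixed]; [rewrite -{2}fixed | apply: funext].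
Qed.

Lemma least_period_prod_map (x : 'I_n -> X) (m : 'I_n -> nat) :
  (forall i, least_period f (x i) (m i)) -> least_period (prod_map f) x (lcm_fam m).
Proof.
move=> xm; apply: least_periodP => [|k].
  by apply: lcm_fam_gt0 => i; case: (xm i).
rewrite iter_prod_map_fixed dvdn_lcm_famP.
by split=> fixed i; apply/(least_period_fixedP (xm i)).
Qed.

Lemma Per_prod_map :
  Per (@prod_map X n f) =
    [set k | exists m : 'I_n -> nat, (forall i, Per f (m i)) /\ k = lcm_fam m].
Proof.
apply/seteqP; split=> k /=.
  move=> /PerP [x xk]; have [k_gt0 [gkx _]] := xk.
  have /fin_all_exists [m xm] : forall i, exists q, least_period f (x i) q.
    by move=> i; apply: (least_period_exists k_gt0); move/iter_prod_map_fixed: gkx.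
  exists m; split; first by move=> i; apply/PerP; exists (x i).
  exact: least_period_uniq xk (least_period_prod_map xm).
case=> m [mP ->].
have /fin_all_exists [x xm] : forall i, exists y, least_period f y (m i).
  by move=> i; apply/PerP.
by apply/PerP; exists x; apply: least_period_prod_map.
Qed.

End ProductMap.

Lemma iter_induced_map (X : Type) (f : X -> X) k (A : set X) :
  iter k (induced_map f) A = iter k f @` A.
Proof. by elim: k => [|k IH] /=; rewrite ?image_id // IH /induced_map image_comp. Qed.

Section SeqSets.
Variables (X : eqType) (g : X -> X).
Implicit Types (s : seq X) (y : X).

Lemma image_seq_set_eq s :
  g @` [set x | x \in s] = [set x | x \in s] <->
  (forall y, y \in s -> g y \in s) /\ (forall y, y \in s -> exists2 z, z \in s & g z = y).
Proof.
split=> [gs|[into onto]].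
  split=> y ys.
    have gy : (g @` [set x | x \in s]) (g y) by exists y.
    by rewrite gs in gy.
  have : [set x | x \in s] y by [].
  by rewrite -gs => -[z zs <-]; exists z.
apply/seteqP; split=> y /=; first by case=> z zs <-; apply: into.
by move=> /onto [z zs <-]; exists z.
Qed.

Lemma seq_pigeonhole (h : nat -> X) s :
  (forall j, (j <= size s)%N -> h j \in s) -> exists a b, (a < b)%N /\ h a = h b.
Proof.
move=> hs; have /(uniqPn (h 0)) [a [b [ab b_lt hab]]] : ~~ uniq (map h (iota 0 (size s).+1)).
  apply/negP => uniq_h.
  have : {subset map h (iota 0 (size s).+1) <= s}.
    by move=> z /mapP [j]; rewrite mem_iota => /andP [_ j_lt] ->; apply: hs.
  by move=> /(uniq_leq_size uniq_h); rewrite size_map size_iota ltnn.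
rewrite size_map size_iota in b_lt; exists a, b; split=> //.
by rewrite !(nth_map 0) ?size_iota ?(ltn_trans ab) // !nth_iota ?(ltn_trans ab) in hab.
Qed.

Lemma periodic_of_onto s :
  (forall y, y \in s -> exists2 z, z \in s & g z = y) ->
  forall y, y \in s -> exists2 c, (0 < c)%N & iter c g y = y.
Proof.
move=> onto y ys.
have /choice [h hP] : forall j, exists z, z \in s /\ iter j g z = y.
  elim=> [|j [z [zs gjz]]]; first by exists y; split.
  by have [w ws gw] := onto z zs; exists w; rewrite iterSr gw; split.
have [a [b [ab hab]]] : exists a b, (a < b)%N /\ h a = h b.
  by apply: (@seq_pigeonhole h s) => j _; case: (hP j).
exists (b - a); first by rewrite subn_gt0.
by rewrite -{1}(proj2 (hP a)) -iterD subnK ?(ltnW ab) // hab (proj2 (hP b)).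
Qed.

Lemma image_seq_set_eq_periodic s :
  (forall y, y \in s -> g y \in s) ->
  (forall y, y \in s -> exists2 c, (0 < c)%N & iter c g y = y) ->
  g @` [set x | x \in s] = [set x | x \in s].
Proof.
move=> into periodic; apply/image_seq_set_eq; split=> // y ys.
have [c c_gt0 gcy] := periodic y ys.
exists (iter c.-1 g y); first by elim: c.-1 => //= c' IH; apply: into.
by rewrite -iterS prednK.
Qed.

Lemma seq_set_neq0 (s : seq X) : [set x | x \in s] !=set0 <-> s != [::].
Proof.
by case: s => [|y s]; split=> //; [case=> y | move=> _; exists y; rewrite /= mem_head].
Qed.

End SeqSets.

Section InvariantFiniteSet.
Variables (X : eqType) (f : X -> X) (s : seq X) (p : nat).
Hypothesis s_period : least_period (induced_map f) [set x | x \in s] p.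

Let p_gt0 : (0 < p)%N. Proof. by case: s_period. Qed.

Lemma image_iter_seq_set k :
  iter k f @` [set x | x \in s] = [set x | x \in s] <-> (p %| k)%N.
Proof. by rewrite -iter_induced_map; apply: least_period_fixedP. Qed.

Lemma mem_iter_period c y : y \in s -> iter (c * p) f y \in s.
Proof.
have /image_iter_seq_set /image_seq_set_eq [into _] := dvdn_mull c (dvdnn p).
exact: into.
Qed.

Lemma periodic_mem y : y \in s -> exists q, least_period f y q.
Proof.
move=> ys; have /image_iter_seq_set /image_seq_set_eq [_ onto] := dvdnn p.
have [c c_gt0 gcy] := periodic_of_onto onto ys.
by apply: (@least_period_exists _ _ _ (c * p)); rewrite ?muln_gt0 ?c_gt0 // iterM.
Qed.

Lemma mem_iter_gcdn t y q : y \in s -> least_period f y q -> iter (t * gcdn p q) f y \in s.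
Proof.
move=> ys yq; case: (egcdnP q p_gt0) => km kn def_gcd _.
have -> : iter (t * gcdn p q) f y = iter (t * km * p) f y.
  by apply/(least_period_eqmod _ _ yq); rewrite -mulnA def_gcd mulnDr mulnA modnMDl.
exact: mem_iter_period.
Qed.

Section PeriodEnumeration.
Variables (l : nat) (m : 'I_l -> nat) (rep : 'I_l -> X).
Hypotheses (m_inj : injective m) (rep_mem : forall i, rep i \in s).
Hypothesis rep_period : forall i, least_period f (rep i) (m i).
Hypothesis period_cover : forall y, y \in s -> exists i, least_period f y (m i).

Lemma sum_period_div_gcdn_le : (\sum_(i < l) (m i %/ gcdn p (m i)) <= size s)%N.
Proof.
pose S := [seq iter (j * gcdn p (m i)) f (rep i) |
           i <- enum 'I_l, j <- iota 0 (m i %/ gcdn p (m i))].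
have S_sub : {subset S <= s}.
  by move=> _ /allpairsPdep [i [j [_ _ ->]]]; apply: mem_iter_gcdn.
have j_lt i j : j \in iota 0 (m i %/ gcdn p (m i)) -> (j * gcdn p (m i) < m i)%N.
  by rewrite mem_iota add0n /= ltn_divRL // dvdn_gcdr.
have S_uniq : uniq S.
  apply: allpairs_uniq_dep => [|i _|]; [exact: enum_uniq | exact: iota_uniq |].
  move=> _ _ /allpairsPdep [i [j [_ ji ->]]] /allpairsPdep [i' [j' [_ ji' ->]]] /= E.
  have ii' : i = i'.
    apply: m_inj.
    apply: (least_period_uniq (least_period_iter (j * gcdn p (m i)) (rep_period i))).
    by rewrite E; apply: least_period_iter.
  subst i'; have /(least_period_eqmod _ _ (rep_period i)) := E.
  rewrite !modn_small ?j_lt // => /eqP; rewrite eqn_pmul2r ?gcdn_gt0 ?p_gt0 //.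
  by move=> /eqP ->.
have := uniq_leq_size S_uniq S_sub.
rewrite size_allpairs_dep sumnE big_map big_enum /=.
by under eq_bigr do rewrite size_iota.
Qed.

Lemma period_eq_lcm_gcdn : p = lcm_fam (fun i => gcdn p (m i)).
Proof.
set L := lcm_fam _.
have dvd_L i : (gcdn p (m i) %| L)%N by apply: (iffLR (dvdn_lcm_famP _ _) (dvdnn L)).
apply/eqP; rewrite eqn_dvd; apply/andP; split; last first.
  by apply/dvdn_lcm_famP => i; apply: dvdn_gcdl.
have into c y : y \in s -> iter (c * L) f y \in s.
  move=> ys; have [i yi] := period_cover ys.
  by have /dvdnP [t ->] := dvd_L i; rewrite mulnA; apply: mem_iter_gcdn.
apply/image_iter_seq_set/image_seq_set_eq_periodic => y ys.
  by rewrite -[L]mul1n into.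
have [i yi] := period_cover ys; exists (m i); first by case: yi.
exact: least_period_iter_iter yi.
Qed.

End PeriodEnumeration.

Lemma exists_period_enumeration : exists l (m : 'I_l -> nat) (rep : 'I_l -> X),
  [/\ injective m, forall i, rep i \in s, forall i, least_period f (rep i) (m i)
    & forall y, y \in s -> exists i, least_period f y (m i)].
Proof.
have /choice [pr prP] : forall y, exists q, y \in s -> least_period f y q.
  move=> y; case: (boolP (y \in s)) => [/periodic_mem [q yq]|_]; first by exists q.
  by exists 0.
pose P := undup (map pr s).
have /fin_all_exists [rep repP] :
    forall i : 'I_(size P), exists y, y \in s /\ pr y = nth 0 P i.
  move=> i; have : nth 0 P i \in P by apply: mem_nth.
  by rewrite mem_undup => /mapP [y ys ->]; exists y.
exists (size P), (fun i => nth 0 P i), rep; split.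
- by move=> i j /eqP; rewrite nth_uniq ?undup_uniq // => /eqP /val_inj.
- by move=> i; case: (repP i).
- by move=> i; case: (repP i) => ys <-; apply: prP.
- move=> y ys; have yP : pr y \in P by rewrite mem_undup map_f.
  by exists (Ordinal (etrans (index_mem _ _) yP)); rewrite /= nth_index //; apply: prP.
Qed.

Lemma least_period_seq_set_decomp : s != [::] ->
  exists l (d m : 'I_l -> nat), [/\ (0 < l)%N, forall i, Per f (m i) /\ (d i %| m i)%N,
    (\sum_(i < l) (m i %/ d i) <= size s)%N & p = lcm_fam d].
Proof.
move=> s_neq0; have [l [m [rep [m_inj rep_mem rep_period period_cover]]]] :=
  exists_period_enumeration.
exists l, (fun i => gcdn p (m i)), m; split.
- case: s s_neq0 period_cover => // y s' _ /(_ y (mem_head _ _)) [i _].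
  exact: leq_ltn_trans (ltn_ord i).
- by move=> i; split; [apply/PerP; exists (rep i) | apply: dvdn_gcdr].
- exact: sum_period_div_gcdn_le.
- exact: period_eq_lcm_gcdn.
Qed.

End InvariantFiniteSet.

Section OrbitPieces.
Variables (X : eqType) (f : X -> X) (l : nat) (d m : 'I_l -> nat) (x : 'I_l -> X).
Hypothesis x_period : forall i, least_period f (x i) (m i).
Hypothesis x_coherent : forall i j, m i = m j -> x i = x j.
Hypothesis dvdn_dm : forall i, (d i %| m i)%N.

(* Pieces with equal periods start from the same point [x i], so they are merged
   into a single orbit of [f^(orbit_step i)]. *)
Definition orbit_step i := \big[lcmn/1%N]_(j | m j == m i) d j.

Definition orbit_pieces : seq X :=
  [seq iter (k * orbit_step i) f (x i) | i <- enum 'I_l, k <- iota 0 (m i %/ orbit_step i)].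

Let m_gt0 i : (0 < m i)%N. Proof. by case: (x_period i). Qed.

Lemma dvdn_orbit_step i : (d i %| orbit_step i)%N.
Proof. by have /dvdn_biglcmP := dvdnn (orbit_step i); apply. Qed.

Lemma orbit_step_dvdn i : (orbit_step i %| m i)%N.
Proof. by apply/dvdn_biglcmP => j /eqP <-. Qed.

Let orbit_step_gt0 i : (0 < orbit_step i)%N.
Proof. exact: dvdn_gt0 (m_gt0 i) (orbit_step_dvdn i). Qed.

Lemma orbit_step_eq i j : m i = m j -> orbit_step i = orbit_step j.
Proof. by move=> mij; apply: eq_bigl => k; rewrite mij. Qed.

Lemma mem_orbit_pieces y :
  y \in orbit_pieces <-> exists i k, y = iter (k * orbit_step i) f (x i).
Proof.
split=> [/allpairsPdep [i [k [_ _ ->]]]|[i [k ->]]]; first by exists i, k.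
apply/allpairsPdep; exists i, (k %% (m i %/ orbit_step i)); split.
- by rewrite mem_enum.
- rewrite mem_iota add0n ltn_pmod // divn_gt0 ?orbit_step_gt0 //.
  exact: dvdn_leq (m_gt0 i) (orbit_step_dvdn i).
- apply/(least_period_eqmod _ _ (x_period i)).
  by rewrite muln_modl divnK ?orbit_step_dvdn ?modn_mod.
Qed.

Lemma dvdn_orbit_step_of_stable k :
  (forall y, y \in orbit_pieces -> iter k f y \in orbit_pieces) ->
  forall i, (orbit_step i %| k)%N.
Proof.
move=> stable i; have xi : x i \in orbit_pieces by apply/mem_orbit_pieces; exists i, 0.
have /mem_orbit_pieces [j [c xij]] := stable _ xi.
have mij : m i = m j.
  apply: (least_period_uniq (least_period_iter k (x_period i))).
  by rewrite xij; apply: least_period_iter.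
rewrite -(x_coherent mij) -(orbit_step_eq mij) in xij.
have /(least_period_eqmod _ _ (x_period i)) /(congr1 (modn^~ (orbit_step i))) := xij.
by rewrite /= !modn_dvdm ?orbit_step_dvdn // modnMl /dvdn => ->.
Qed.

Lemma image_iter_orbit_pieces k : (forall i, (orbit_step i %| k)%N) ->
  iter k f @` [set y | y \in orbit_pieces] = [set y | y \in orbit_pieces].
Proof.
move=> dvd_k; apply: image_seq_set_eq_periodic => y /mem_orbit_pieces [i [c ->]].
  have /dvdnP [t ->] := dvd_k i.
  by apply/mem_orbit_pieces; exists i, (t + c); rewrite -iterD mulnDl.
exists (m i); first exact: m_gt0.
exact: least_period_iter_iter (least_period_iter _ (x_period i)).
Qed.

Lemma size_orbit_pieces : (size orbit_pieces <= \sum_(i < l) (m i %/ d i))%N.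
Proof.
rewrite size_allpairs_dep sumnE big_map big_enum /=.
under eq_bigr do rewrite size_iota.
apply: leq_sum => i _; apply: leq_div2l; first exact: dvdn_gt0 (m_gt0 i) (dvdn_dm i).
exact: dvdn_leq (orbit_step_gt0 i) (dvdn_orbit_step i).
Qed.

Lemma least_period_orbit_pieces :
  least_period (induced_map f) [set y | y \in orbit_pieces] (lcm_fam d).
Proof.
apply: least_periodP => [|k]; first by apply: lcm_fam_gt0 => i; apply: dvdn_gt0 (dvdn_dm i).
rewrite iter_induced_map dvdn_lcm_famP; split=> [/image_seq_set_eq [stable _] i|dvd_k].
  exact: dvdn_trans (dvdn_orbit_step i) (dvdn_orbit_step_of_stable stable i).
by apply: image_iter_orbit_pieces => i; apply/dvdn_biglcmP => j _.
Qed.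

End OrbitPieces.

Lemma exists_coherent_points (X : Type) (f : X -> X) l (m : 'I_l -> nat) :
  (0 < l)%N -> (forall i, Per f (m i)) -> exists x : 'I_l -> X,
  (forall i, least_period f (x i) (m i)) /\ (forall i j, m i = m j -> x i = x j).
Proof.
move=> l_gt0 mP; have [x0 _] := iffLR (PerP _ _) (mP (Ordinal l_gt0)).
have /choice [pt ptP] : forall q, exists y, Per f q -> least_period f y q.
  move=> q; case: (pselect (Per f q)) => [/PerP [y yq]|nq]; first by exists y.
  by exists x0 => /nq.
by exists (fun i => pt (m i)); split=> [i|i j -> //]; apply: ptP.
Qed.

Lemma exists_seq_set_period (X : eqType) (f : X -> X) l (d m : 'I_l -> nat) :
  (0 < l)%N -> (forall i, Per f (m i) /\ (d i %| m i)%N) ->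
  exists s : seq X, [/\ s != [::], (size s <= \sum_(i < l) (m i %/ d i))%N
                      & least_period (induced_map f) [set x | x \in s] (lcm_fam d)].
Proof.
move=> l_gt0 dm.
have [x [x_period x_coherent]] := exists_coherent_points l_gt0 (fun i => proj1 (dm i)).
have dvdn_dm i : (d i %| m i)%N by case: (dm i).
have xS : x (Ordinal l_gt0) \in orbit_pieces f d m x.
  by apply/(mem_orbit_pieces x_period dvdn_dm); exists (Ordinal l_gt0), 0.
exists (orbit_pieces f d m x); split.
- by apply/negP => /eqP S0; rewrite S0 in xS.
- exact: size_orbit_pieces.
- exact: least_period_orbit_pieces.
Qed.

Lemma PerOn_Fn (X : eqType) (f : X -> X) n :
  PerOn (@Fn X n) (induced_map f) =
    [set k | exists l : nat, [/\ (1 <= l)%N, (l <= n)%N &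
       exists d m : 'I_l -> nat,
         [/\ forall i, Per f (m i) /\ (d i %| m i)%N,
             (\sum_(i < l) (m i %/ d i) <= n)%N & k = lcm_fam d]]].
Proof.
apply/seteqP; split=> k /=.
  move=> [A [[A_neq0 [s [s_le defA]]] s_period]]; subst A.
  have s_neq0 := iffLR (seq_set_neq0 _) A_neq0.
  have [l [d [m [l_gt0 dm sum_le ->]]]] := least_period_seq_set_decomp s_period s_neq0.
  have sum_le_n := leq_trans sum_le s_le.
  exists l; split=> //; last by exists d, m.
  apply: leq_trans sum_le_n; apply: leq_sum_divn => i; first exact: Per_gt0 (proj1 (dm i)).
  exact: proj2 (dm i).
move=> [l [l_gt0 _ [d [m [dm sum_le ->]]]]].
have [s [s_neq0 s_size s_period]] := exists_seq_set_period l_gt0 dm.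
exists [set x | x \in s]; split=> //; split; first exact/seq_set_neq0.
by exists s; split=> //; apply: leq_trans s_size sum_le.
Qed.

Lemma PerOn_Ffin (X : eqType) (f : X -> X) :
  PerOn (@Ffin X) (induced_map f) =
    [set k | exists l : nat, (1 <= l)%N /\
       exists d m : 'I_l -> nat, (forall i, Per f (m i) /\ (d i %| m i)%N) /\ k = lcm_fam d].
Proof.
apply/seteqP; split=> k /=.
  move=> [A [[A_neq0 [s defA]] s_period]]; subst A.
  have s_neq0 := iffLR (seq_set_neq0 _) A_neq0.
  have [l [d [m [l_gt0 dm _ ->]]]] := least_period_seq_set_decomp s_period s_neq0.
  by exists l; split=> //; exists d, m.
move=> [l [l_gt0 [d [m [dm ->]]]]].
have [s [s_neq0 _ s_period]] := exists_seq_set_period l_gt0 dm.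
exists [set x | x \in s]; split=> //; split; first exact/seq_set_neq0.
by exists s.
Qed.

Theorem proposition8p1 (R : realType) (X : metricType R) (f : X -> X) (n : nat) :
  compact [set: X] -> continuous f ->
  [/\ Per (@prod_map X n f) =
        [set k | exists m : 'I_n -> nat, (forall i, Per f (m i)) /\ k = lcm_fam m],
      PerOn (@Fn X n) (induced_map f) =
        [set k | exists l : nat, [/\ (1 <= l)%N, (l <= n)%N &
           exists d m : 'I_l -> nat,
             [/\ forall i, Per f (m i) /\ (d i %| m i)%N,
                 (\sum_(i < l) (m i %/ d i) <= n)%N &
                 k = lcm_fam d]]]
    & PerOn (@Ffin X) (induced_map f) =
        [set k | exists l : nat, (1 <= l)%N /\
           exists d m : 'I_l -> nat,
             (forall i, Per f (m i) /\ (d i %| m i)%N) /\ k = lcm_fam d]].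
Proof.
by move=> _ _; split; [exact: Per_prod_map | exact: PerOn_Fn | exact: PerOn_Ffin].
Qed.
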